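(* Let $S$ be a semigroup and let $E(S)$ denote its set of idempotents. Then $S$ is a local group if and only if either $E(S)=\emptyset$, or $S$ has a minimal ideal $J$ which is a completely simple semigroup and contains $E(S)$.
   Context: A semigroup $S$ is a local group if $eSe$ is a group for every idempotent $e$ of $S$ (so a semigroup without idempotents is a local group). A semigroup is simple if it has a unique ideal (itself). $E(S)$ is partially ordered by $e\le f$ iff $ef=fe=e$. A simple semigroup is completely simple if its set of idempotents has minimal elements for $\le$. A minimal ideal of $S$ is an ideal containing no strictly smaller ideal. *)

Section Semigroups.
Variables (T : Type) (op : T -> T -> T).

Definition idempotent (e : T) : Prop := op e e = e.

Definition idem_le (e f : T) : Prop := op e f = e /\ op f e = e.

Definition is_group (A : T -> Prop) : Prop :=
  (forall x y, A x -> A y -> A (op x y)) /\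
  exists u, A u /\
    forall a, A a -> op u a = a /\ op a u = a /\
      exists b, A b /\ op a b = u /\ op b a = u.

Definition corner (e : T) : T -> Prop :=
  fun x => exists s, x = op (op e s) e.

Definition local_group : Prop :=
  forall e, idempotent e -> is_group (corner e).

Definition ideal_of (A I : T -> Prop) : Prop :=
  (exists x, I x) /\ (forall x, I x -> A x) /\
  (forall a x, A a -> I x -> I (op a x) /\ I (op x a)).

Definition whole : T -> Prop := fun _ => True.

Definition minimal_ideal (J : T -> Prop) : Prop :=
  ideal_of whole J /\
  forall I, ideal_of whole I -> (forall x, I x -> J x) ->
    forall x, J x -> I x.

Definition simple (A : T -> Prop) : Prop :=
  forall I, ideal_of A I -> forall x, A x -> I x.

Definition completely_simple (A : T -> Prop) : Prop :=
  (forall x y, A x -> A y -> A (op x y)) /\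
  simple A /\
  exists e, A e /\ idempotent e /\
    forall f, A f -> idempotent f -> idem_le f e -> f = e.

End Semigroups.

From Pilot Require Import Defs.
From Stdlib Require Import Classical.

(* If [eSe] is a group, inverses there give [e = g y h] for every [y] in
   [SeS]; so any ideal meeting [SeS] contains [e]. Hence [SeS] is a minimal
   ideal and a simple semigroup, and [e] is primitive in it because [e] is
   the only idempotent of the group [eSe]. Minimal ideals are unique, so
   [SfS = SeS] contains every idempotent [f].
   Conversely, in a simple semigroup [J] every [b] lies in [J a J]; this
   carries primitivity from one idempotent of [J] to all of them. For [e] in
   [J] and [a] in [eSe], writing [e = x a y] gives [u a v = e] with
   [u, v] in [eSe], and as [e] is the only idempotent of [eSe] (primitivity),
   [eSe] is a group. *)

Section LocalGroups.
Variables (T : Type) (op : T -> T -> T).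
Hypothesis assoc : forall x y z, op x (op y z) = op (op x y) z.

Local Notation idempotent := (idempotent T op).
Local Notation corner := (corner T op).
Local Notation ideal_of := (ideal_of T op).
Local Notation whole := (whole T).

Definition primitive_in (A : T -> Prop) (e : T) : Prop :=
  forall f, A f -> idempotent f -> idem_le T op f e -> f = e.

(* [S e S]; for idempotent [e] this is the principal ideal [S^1 e S^1]. *)
Definition principal_ideal (e : T) : T -> Prop :=
  fun z => exists a b, z = op (op a e) b.

Lemma idem_mulr e x : idempotent e -> op (op x e) e = op x e.
Proof. intro Ie. rewrite <- assoc, Ie. reflexivity. Qed.

Section Corner.
Variable e : T.
Hypothesis Ie : idempotent e.

Lemma corner_mull x : corner e x -> op e x = x.
Proof. intros [s ->]. rewrite !assoc, Ie. reflexivity. Qed.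

Lemma corner_mulr x : corner e x -> op x e = x.
Proof. intros [s ->]. apply idem_mulr, Ie. Qed.

Lemma corner_id : corner e e.
Proof. exists e. rewrite !Ie. reflexivity. Qed.

Lemma corner_mul x y : corner e x -> corner e y -> corner e (op x y).
Proof.
  intros [s ->] [t ->]. exists (op (op s e) t).
  rewrite !assoc, (idem_mulr e _ Ie). reflexivity.
Qed.

Lemma corner_le f : corner e f -> idem_le T op f e.
Proof. intro Hf. split; [apply corner_mulr | apply corner_mull]; exact Hf. Qed.

Lemma le_corner f : idem_le T op f e -> corner e f.
Proof. intros [Hfe Hef]. exists f. rewrite Hef, Hfe. reflexivity. Qed.

Lemma corner_group :
  (forall f, corner e f -> idempotent f -> f = e) ->
  (forall a, corner e a ->
     exists u v, corner e u /\ corner e v /\ op (op u a) v = e) ->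
  is_group T op (corner e).
Proof.
  intros Hidem Hdiv. split; [exact corner_mul|].
  exists e. split; [exact corner_id|].
  intros a Ha. split; [apply corner_mull, Ha|]. split; [apply corner_mulr, Ha|].
  destruct (Hdiv a Ha) as (u & v & Hu & Hv & Euav).
  (* [a (v u)] and [(v u) a] are idempotents of [eSe], hence equal to [e]. *)
  exists (op v u). split; [apply corner_mul; assumption|]. split.
  - apply Hidem; [repeat apply corner_mul; assumption|].
    unfold Defs.idempotent.
    transitivity (op (op a v) (op (op (op u a) v) u)); [rewrite !assoc; reflexivity|].
    rewrite Euav, (corner_mull u Hu), assoc. reflexivity.
  - apply Hidem; [repeat apply corner_mul; assumption|].
    unfold Defs.idempotent.
    transitivity (op (op v (op (op u a) v)) (op u a)); [rewrite !assoc; reflexivity|].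
    rewrite Euav, (corner_mulr v Hv), !assoc. reflexivity.
Qed.

Section Group.
Hypothesis Ge : is_group T op (corner e).

Lemma group_corner_inv a :
  corner e a -> exists b, corner e b /\ op a b = e /\ op b a = e.
Proof.
  intro Ha. destruct Ge as [_ (u & Hu & Hunit)].
  assert (Eu : u = e).
  { destruct (Hunit e corner_id) as [Hue _].
    rewrite <- Hue. symmetry. apply corner_mulr, Hu. }
  subst u. destruct (Hunit a Ha) as (_ & _ & Hinv). exact Hinv.
Qed.

Lemma group_corner_idem f : corner e f -> idempotent f -> f = e.
Proof.
  intros Hf If. destruct (group_corner_inv f Hf) as (b & _ & Efb & _).
  transitivity (op f (op f b)).
  - rewrite Efb. symmetry. apply corner_mulr, Hf.
  - rewrite assoc, If. exact Efb.
Qed.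

End Group.
End Corner.

Lemma principal_ideal_of e : ideal_of whole (principal_ideal e).
Proof.
  split; [|split].
  - exists (op (op e e) e), e, e. reflexivity.
  - intros; exact I.
  - intros c x _ (a & b & ->). split.
    + exists (op c a), b. rewrite !assoc. reflexivity.
    + exists a, (op b c). rewrite !assoc. reflexivity.
Qed.

Lemma principal_ideal_id e : idempotent e -> principal_ideal e e.
Proof. intro Ie. exists e, e. rewrite !Ie. reflexivity. Qed.

Lemma principal_ideal_mul e x y :
  principal_ideal e x -> principal_ideal e y -> principal_ideal e (op x y).
Proof.
  intros _ Hy. destruct (principal_ideal_of e) as (_ & _ & Habs).
  apply (Habs x y I Hy).
Qed.

Lemma principal_ideal_corner e x :
  idempotent e -> corner e x -> principal_ideal e x.
Proof. intros Ie [s ->]. exists (op e s), e. symmetry. apply idem_mulr, Ie. Qed.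

Lemma minimal_ideal_sub J K :
  minimal_ideal T op J -> ideal_of whole K -> forall x, J x -> K x.
Proof.
  intros [[[j Hj] [_ HJ]] Jmin] [[k Hk] [_ HK]].
  assert (HJK : ideal_of whole (fun x => J x /\ K x)).
  { split; [|split].
    - exists (op j k). split; [apply (HJ k j I Hj) | apply (HK j k I Hk)].
    - intros; exact I.
    - intros c x _ [HxJ HxK].
      destruct (HJ c x I HxJ), (HK c x I HxK). tauto. }
  intros x Hx. apply (Jmin _ HJK (fun y Hy => proj1 Hy) x Hx).
Qed.

Section PrincipalIdeal.
Variable e : T.
Hypothesis Ie : idempotent e.
Hypothesis Ge : is_group T op (corner e).

(* With [g], [h] inverse to [e a e], [e b e] in [eSe]: [g (a e b) h = e]. *)
Lemma principal_ideal_factor y : principal_ideal e y ->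
  exists p q, corner e p /\ corner e q /\ op (op p y) q = e.
Proof.
  intros (a & b & ->).
  destruct (group_corner_inv e Ie Ge (op (op e a) e)) as (g & Hg & _ & Hga);
    [exists a; reflexivity|].
  destruct (group_corner_inv e Ie Ge (op (op e b) e)) as (h & Hh & Hbh & _);
    [exists b; reflexivity|].
  exists g, h. split; [exact Hg|]. split; [exact Hh|].
  transitivity (op (op g (op (op e a) e)) (op (op (op e b) e) h)).
  - rewrite !assoc, (idem_mulr e _ Ie), (corner_mulr e Ie g Hg).
    rewrite <- (assoc _ e h), (corner_mull e Ie h Hh). reflexivity.
  - rewrite Hga, Hbh. exact Ie.
Qed.

Lemma principal_ideal_generated (K : T -> Prop) :
  (forall c x, principal_ideal e c -> K x -> K (op c x) /\ K (op x c)) ->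
  forall y, principal_ideal e y -> K y -> K e.
Proof.
  intros HK y Hy HKy.
  destruct (principal_ideal_factor y Hy) as (p & q & Hp & Hq & <-).
  apply (HK q); [apply principal_ideal_corner; assumption|].
  apply (HK p); [apply principal_ideal_corner; assumption|].
  exact HKy.
Qed.

Lemma principal_ideal_minimal : minimal_ideal T op (principal_ideal e).
Proof.
  split; [apply principal_ideal_of|].
  intros K [[y Hy] [_ HK]] Hsub x (a & b & ->).
  assert (Ke : K e).
  { apply (principal_ideal_generated K) with y; auto.
    intros c z _ Hz. exact (HK c z I Hz). }
  apply (HK b _ I). apply (HK a _ I). exact Ke.
Qed.

Lemma principal_ideal_completely_simple :
  completely_simple T op (principal_ideal e).
Proof.
  split; [exact (principal_ideal_mul e)|]. split.
  - intros K [[y Hy] [Hsub HK]] x (c & d & ->).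
    assert (Ke : K e) by (apply (principal_ideal_generated K) with y; auto).
    assert (Hce : principal_ideal e (op c e))
      by (exists c, e; symmetry; apply idem_mulr, Ie).
    assert (Hed : principal_ideal e (op e d)) by (exists e, d; rewrite Ie; reflexivity).
    replace (op (op c e) d) with (op (op (op c e) e) (op e d))
      by (rewrite !assoc, !(idem_mulr e _ Ie); reflexivity).
    apply (HK _ _ Hed). apply (HK _ _ Hce). exact Ke.
  - exists e. split; [apply principal_ideal_id, Ie|]. split; [exact Ie|].
    intros f _ If Hfe. apply (group_corner_idem e Ie Ge); [apply le_corner|]; assumption.
Qed.

End PrincipalIdeal.

Lemma local_group_principal_ideal e : local_group T op -> idempotent e ->
  minimal_ideal T op (principal_ideal e) /\
  completely_simple T op (principal_ideal e) /\
  (forall f, idempotent f -> principal_ideal e f).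
Proof.
  intros LG Ie. split; [apply principal_ideal_minimal; auto|].
  split; [apply principal_ideal_completely_simple; auto|].
  intros f If.
  apply (minimal_ideal_sub (principal_ideal f)); [| apply principal_ideal_of |].
  - apply principal_ideal_minimal; auto.
  - apply principal_ideal_id, If.
Qed.

Section SimpleSemigroup.
Variable J : T -> Prop.
Hypothesis Jmul : forall x y, J x -> J y -> J (op x y).
Hypothesis Jsimple : simple T op J.

Lemma simple_divides a b : J a -> J b ->
  exists x y, J x /\ J y /\ b = op (op x a) y.
Proof.
  intros Ha Hb.
  apply (Jsimple (fun z => exists x y, J x /\ J y /\ z = op (op x a) y)); [|exact Hb].
  split; [|split].
  - exists (op (op a a) a), a, a. auto.
  - intros z (x & y & Hx & Hy & ->). auto.
  - intros c z Hc (x & y & Hx & Hy & ->). split.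
    + exists (op c x), y. rewrite !assoc. auto.
    + exists x, (op y c). rewrite !assoc. auto.
Qed.

(* Write [f = p q] with [p] in [f J e0], [q] in [e0 J f], so that [q p] and
   [q g p] are idempotents of [e0 J e0] below [e0], hence equal to [e0]; then
   [g = f g f = p (q g p) q = p (q p) q = f]. *)
Lemma simple_primitive e0 f : J e0 -> idempotent e0 -> primitive_in J e0 ->
  J f -> idempotent f -> primitive_in J f.
Proof.
  intros He0 Ie0 Pe0 Hf If g Hg Ig [Hgf Hfg].
  destruct (simple_divides e0 f He0 Hf) as (p0 & q0 & Hp0 & Hq0 & Ef).
  set (p := op (op f p0) e0). set (q := op (op e0 q0) f).
  assert (Hp : J p) by (unfold p; auto).
  assert (Hq : J q) by (unfold q; auto).
  assert (Epq : op p q = f).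
  { unfold p, q.
    transitivity (op (op f (op (op p0 e0) q0)) f).
    - rewrite !assoc, (idem_mulr e0 _ Ie0). reflexivity.
    - rewrite <- Ef, !If. reflexivity. }
  assert (pe0 : op p e0 = p) by (unfold p; apply idem_mulr, Ie0).
  assert (e0q : op e0 q = q) by (unfold q; rewrite !assoc, Ie0; reflexivity).
  assert (fp : op f p = p) by (unfold p; rewrite !assoc, If; reflexivity).
  assert (Eqp : op q p = e0).
  { apply Pe0; [auto| |split; [rewrite <- assoc, pe0 | rewrite assoc, e0q]; reflexivity].
    unfold Defs.idempotent.
    rewrite <- assoc, (assoc p q p), Epq, fp. reflexivity. }
  assert (Eqgp : op (op q g) p = e0).
  { apply Pe0; [auto| |split; [rewrite <- assoc, pe0 | rewrite !assoc, e0q]; reflexivity].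
    unfold Defs.idempotent.
    transitivity (op (op q (op (op g (op p q)) g)) p); [rewrite !assoc; reflexivity|].
    rewrite Epq, Hgf, Ig. reflexivity. }
  transitivity (op (op p (op (op q g) p)) q).
  - rewrite !assoc, Epq, Hfg, <- (assoc g p q), Epq, Hgf. reflexivity.
  - rewrite Eqgp, <- Eqp, !assoc, Epq, <- assoc, Epq. exact If.
Qed.

End SimpleSemigroup.

Lemma ideal_completely_simple_local_group J :
  ideal_of whole J -> completely_simple T op J ->
  (forall e, idempotent e -> J e) -> local_group T op.
Proof.
  intros [_ [_ Jabs]] [Jmul [Jsimple (e0 & He0 & Ie0 & Pe0)]] Jidem e Ie.
  assert (He : J e) by auto.
  assert (Jcorner : forall x, corner e x -> J x).
  { intros x [s ->]. apply (Jabs (op e s) e I He). }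
  assert (Pe : primitive_in J e) by (apply (simple_primitive J Jmul Jsimple e0); auto).
  apply corner_group; [exact Ie| |].
  - intros f Hf If. apply Pe; [apply Jcorner | | apply corner_le]; assumption.
  - intros a Ha.
    destruct (simple_divides J Jmul Jsimple a e (Jcorner a Ha) He) as (x & y & _ & _ & Ee).
    exists (op (op e x) e), (op (op e y) e).
    split; [exists x; reflexivity|]. split; [exists y; reflexivity|].
    transitivity (op (op e (op (op x a) y)) e).
    + rewrite !assoc, <- (assoc _ e a), (corner_mull e Ie a Ha).
      rewrite <- (assoc _ a e), (corner_mulr e Ie a Ha). reflexivity.
    + rewrite <- Ee, !Ie. reflexivity.
Qed.

End LocalGroups.

Theorem proposition1 (T : Type) (op : T -> T -> T)
  (assoc : forall x y z, op x (op y z) = op (op x y) z) :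
  local_group T op <->
  ((forall e, ~ idempotent T op e) \/
   exists J : T -> Prop,
     minimal_ideal T op J /\ completely_simple T op J /\
     (forall e, idempotent T op e -> J e)).
Proof.
  split.
  - intro LG. destruct (classic (exists e, idempotent T op e)) as [[e Ie] | Nidem].
    + right. exists (principal_ideal T op e).
      exact (local_group_principal_ideal T op assoc e LG Ie).
    + left. intros e Ie. apply Nidem. exists e. exact Ie.
  - intros [Nidem | (J & [Jideal _] & Jcs & Jidem)].
    + intros e Ie. destruct (Nidem e Ie).
    + exact (ideal_completely_simple_local_group T op assoc J Jideal Jcs Jidem).
Qed.
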